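(* Assume $\lfloor (M_1+\dots+M_n)/p\rfloor=n-1$ (ample reduction). Then for every $l\in\{1,\dots,n-1\}$ and every subset $I\subset\{1,\dots,n\}$ with $|I|=l$ we have $(l-1)p<\sum_{i\in I}M_i<lp$.
   Context: $p,q$ are primes, $n$ a positive integer with $p>n\ge2$, $p>q$; $m_1,\dots,m_n$ are positive integers $<q$, and $M_i$ is the least positive integer with $M_i\equiv -m_iq^{-1}\pmod p$ (so $1\le M_i\le p-1$). *)

From mathcomp Require Import all_boot.
Set Implicit Arguments. Unset Strict Implicit. Unset Printing Implicit Defensive.

(* For a prime p not dividing q, "M = -m q^{-1} (mod p)" is written out as
   M * q + m = 0 (mod p) (multiply both sides by the unit q mod p).
   [is_least_M p q m M] : M is the least positive integer with
   M = -m q^{-1} (mod p). *)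
Definition congrM (p q m k : nat) : Prop := (k * q + m) %% p = 0.

Definition is_least_M (p q m M : nat) : Prop :=
  0 < M /\ congrM p q m M /\ (forall k, 0 < k -> congrM p q m k -> M <= k).

(* Each M_i lies in [1, p-1]: reducing a solution of the congruence mod p
   gives another positive solution, because p does not divide m_i.  Hence a
   sum of l of the M_i is at most l(p-1) < lp.  Conversely the hypothesis
   gives (n-1)p <= M_1 + ... + M_n, and the n-l terms outside I contribute at
   most (n-l)(p-1), so the l terms in I contribute at least
   (l-1)p + (n-l) > (l-1)p. *)
From mathcomp Require Import all_boot.
From mathcomp Require Import zify.

Set Implicit Arguments.
Unset Strict Implicit.
Unset Printing Implicit Defensive.

Lemma congrM_modn p q m k : congrM p q m k -> congrM p q m (k %% p).
Proof. by rewrite /congrM -modnDml -modnMml modnDml. Qed.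

Lemma is_least_M_lt p q m M :
  0 < p -> ~~ (p %| m) -> is_least_M p q m M -> M < p.
Proof.
move=> p_gt0 p_ndvd_m [_ [cM minM]].
have cMp := congrM_modn cM.
have Mp_gt0 : 0 < M %% p.
  rewrite lt0n; apply: contra p_ndvd_m => /eqP Mp0.
  by move: cMp; rewrite /congrM Mp0 mul0n add0n => /eqP.
exact: leq_ltn_trans (minM _ Mp_gt0 cMp) (ltn_pmod _ p_gt0).
Qed.

Section BoundedSums.

Variables (T : finType) (a : T -> nat) (p : nat).
Hypothesis a_lt : forall i, a i < p.

Lemma sum_add_card_leq_mul (A : {pred T}) : \sum_(i in A) a i + #|A| <= #|A| * p.
Proof.
rewrite -sum_nat_const -sum1_card -big_split /=.
by apply: leq_sum => i _; rewrite addn1.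
Qed.

Lemma sum_lt_card_mul (A : {pred T}) :
  0 < #|A| -> \sum_(i in A) a i < #|A| * p.
Proof.
by move=> A_gt0; apply: leq_trans (sum_add_card_leq_mul A); rewrite -addn1 leq_add2l.
Qed.

Lemma card_pred_mul_lt_sum (A : {pred T}) :
  #|T|.-1 * p <= \sum_i a i -> 0 < #|A| < #|T| ->
  #|A|.-1 * p < \sum_(i in A) a i.
Proof.
move=> total_ge /andP[A_gt0 A_lt].
have compl : \sum_(i in [predC A]) a i + #|[predC A]| <= #|[predC A]| * p.
  exact: sum_add_card_leq_mul.
have card_compl := cardC A.
have split_A : \sum_i a i = \sum_(i in A) a i + \sum_(i in [predC A]) a i.
  by rewrite (bigID (mem A)).
rewrite split_A -card_compl in total_ge; rewrite -card_compl in A_lt.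
move: A_gt0 A_lt total_ge; case: #|A| => // k _ compl_gt0.
by rewrite addSn /= mulnDl; lia.
Qed.

End BoundedSums.

Theorem lemma2p7 (p q n : nat) (m M : 'I_n -> nat) :
  prime p -> prime q -> 2 <= n -> n < p -> q < p ->
  (forall i, 0 < m i < q) ->
  (forall i, is_least_M p q (m i) (M i)) ->
  (\sum_(i < n) M i) %/ p = n.-1 ->
  forall l, 1 <= l <= n.-1 ->
  forall I : {set 'I_n}, #|I| = l ->
    (l.-1 * p < \sum_(i in I) M i) && (\sum_(i in I) M i < l * p).
Proof.
move=> p_prime _ _ _ q_lt_p m_bounds M_least S_div l /andP[l_gt0 l_lt] I card_I.
have M_lt i : M i < p.
  have /andP[m_gt0 m_lt] := m_bounds i.
  apply: is_least_M_lt (prime_gt0 p_prime) _ (M_least i).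
  by rewrite gtnNdvd // (ltn_trans m_lt q_lt_p).
have total_ge : #|'I_n|.-1 * p <= \sum_i M i by rewrite card_ord -S_div leq_divM.
have card_bounds : 0 < #|I| < #|'I_n| by rewrite card_I card_ord l_gt0; lia.
have I_gt0 : 0 < #|I| by case/andP: card_bounds.
by rewrite -card_I card_pred_mul_lt_sum ?sum_lt_card_mul.
Qed.
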